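(* Let $0\le\lambda<\gamma\le\delta$ and let $\mathfrak{f}=\mathfrak{s}+\overline{\mathfrak{t}}\in\mathcal{H}^0$. Then $\mathfrak{f}\in\mathcal{R}_H^0(\gamma,\delta,\lambda)$ if and only if $F_\epsilon=\mathfrak{s}+\epsilon\mathfrak{t}\in\mathcal{R}(\gamma,\delta,\lambda)$ for each $\epsilon\in\mathbb{C}$ with $|\epsilon|=1$.
   Context: Let $\mathcal{U}=\{z\in\mathbb{C}:|z|<1\}$. $\mathcal{H}^0$ denotes the class of complex-valued harmonic functions $\mathfrak{f}=\mathfrak{s}+\overline{\mathfrak{t}}$ on $\mathcal{U}$, where $\mathfrak{s}(z)=z+\sum_{m\ge2}a_mz^m$ and $\mathfrak{t}(z)=\sum_{m\ge2}b_mz^m$ are analytic in $\mathcal{U}$. $\mathcal{A}$ denotes the class of analytic functions $F$ in $\mathcal{U}$ with $F(0)=0$, $F'(0)=1$. For real $0\le\lambda<\gamma\le\delta$, $\mathcal{R}_H^0(\gamma,\delta,\lambda)$ is the class of $\mathfrak{f}=\mathfrak{s}+\overline{\mathfrak{t}}\in\mathcal{H}^0$ such that for all $z\in\mathcal{U}$, $\mathrm{Re}\left[\gamma\mathfrak{s}'(z)+\delta z\mathfrak{s}''(z)+\frac{\delta-\gamma}{2}z^2\mathfrak{s}'''(z)-\lambda\right]>\left|\gamma\mathfrak{t}'(z)+\delta z\mathfrak{t}''(z)+\frac{\delta-\gamma}{2}z^2\mathfrak{t}'''(z)\right|$, and $\mathcal{R}(\gamma,\delta,\lambda)$ is the class of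 $F\in\mathcal{A}$ such that $\mathrm{Re}\{\gamma F'(z)+\delta zF''(z)+\frac{\delta-\gamma}{2}z^2F'''(z)\}>\lambda$ for all $z\in\mathcal{U}$. *)

From Stdlib Require Import Reals.
From Coquelicot Require Import Coquelicot.
Open Scope R_scope.

Definition inU (z : C) : Prop := Cmod z < 1.

Definition analytic_U (f : C -> C) : Prop :=
  forall z, inU z -> @ex_derive C_AbsRing C_NormedModule f z.

Definition derivs3_U (f f1 f2 f3 : C -> C) : Prop :=
  forall z, inU z ->
    @is_derive C_AbsRing C_NormedModule f z (f1 z) /\
    @is_derive C_AbsRing C_NormedModule f1 z (f2 z) /\
    @is_derive C_AbsRing C_NormedModule f2 z (f3 z).

Definition Lop (g d : R) (f1 f2 f3 : C -> C) (z : C) : C :=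
  (RtoC g * f1 z + RtoC d * z * f2 z
   + RtoC ((d - g) / 2) * (z * z) * f3 z)%C.

Definition classA (F : C -> C) : Prop :=
  analytic_U F /\ F (RtoC 0) = RtoC 0 /\ @is_derive C_AbsRing C_NormedModule F (RtoC 0) (RtoC 1).

(* class H^0 : f = s + conj t with s(z) = z + sum_{m>=2} a_m z^m,
   t(z) = sum_{m>=2} b_m z^m analytic in U, i.e. s(0)=0, s'(0)=1, t(0)=0, t'(0)=0 *)
Definition classH0 (s t : C -> C) : Prop :=
  analytic_U s /\ analytic_U t /\
  s (RtoC 0) = RtoC 0 /\ @is_derive C_AbsRing C_NormedModule s (RtoC 0) (RtoC 1) /\
  t (RtoC 0) = RtoC 0 /\ @is_derive C_AbsRing C_NormedModule t (RtoC 0) (RtoC 0).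

Definition classRH0 (g d l : R) (s t : C -> C) : Prop :=
  classH0 s t /\
  exists s1 s2 s3 t1 t2 t3 : C -> C,
    derivs3_U s s1 s2 s3 /\ derivs3_U t t1 t2 t3 /\
    forall z, inU z ->
      Re (Lop g d s1 s2 s3 z - RtoC l)%C > Cmod (Lop g d t1 t2 t3 z).

Definition classR (g d l : R) (F : C -> C) : Prop :=
  classA F /\
  exists F1 F2 F3 : C -> C,
    derivs3_U F F1 F2 F3 /\
    forall z, inU z -> Re (Lop g d F1 F2 F3 z) > l.

(** Derivatives and the operator [Lop g d] are linear, so with [Ls], [Lt] the
    operator applied to [s] and [t], [F_eps] lies in [R(g, d, l)] iff
    [Re (Ls z + eps Lt z) > l] on the disc.  Since
    [min_{|eps| = 1} Re (eps w) = - |w|], this holds for every unimodular [eps]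
    iff [Re (Ls z - l) > |Lt z|].  For the converse, [s] and [t] get their
    three derivatives as half the sum and difference of those of [F_1] and
    [F_(-1)]. *)
From Stdlib Require Import Reals Lra.
From Coquelicot Require Import Coquelicot.
Open Scope R_scope.

Lemma Re_mul_unimodular_ge (eps w : C) : Cmod eps = 1 -> - Cmod w <= Re (eps * w).
Proof.
  intros Heps.
  pose proof (re_le_Cmod (eps * w)) as Hre.
  rewrite Cmod_mult, Heps, Rmult_1_l in Hre.
  apply Rabs_le_between in Hre. lra.
Qed.

(* The witness is [- conj w / |w|], or [1] when [w = 0]. *)
Lemma exists_unimodular_mul_eq_opp_Cmod (w : C) :
  exists eps : C, Cmod eps = 1 /\ (eps * w)%C = RtoC (- Cmod w).
Proof.
  destruct (Req_dec (Cmod w) 0) as [Hw0 | Hw0].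
  - exists (RtoC 1). split; [rewrite Cmod_R; apply Rabs_R1 |].
    apply Cmod_eq_0 in Hw0. rewrite Hw0, Cmod_0, Ropp_0. ring.
  - assert (Hnz : RtoC (Cmod w) <> 0%C) by (intro H; apply Hw0; now injection H).
    exists (- Cconj w / RtoC (Cmod w))%C. split.
    + rewrite Cmod_div, Cmod_opp, Cmod_conj, Cmod_R, Rabs_pos_eq by
        (exact Hnz || apply Cmod_ge_0).
      now field.
    + assert (Hww : (Cconj w * w)%C = RtoC (Cmod w * Cmod w)).
      { rewrite Cmult_comm, <- Cmod2_conj. simpl. now rewrite Rmult_1_r. }
      transitivity (- (Cconj w * w) / RtoC (Cmod w))%C; [now field |].
      rewrite Hww. apply injective_projections; simpl; field; exact Hw0.
Qed.

Lemma Re_sub_gt_Cmod_iff (a b : C) (l : R) :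
  Re (a - RtoC l) > Cmod b <->
  (forall eps : C, Cmod eps = 1 -> Re (a + eps * b) > l).
Proof.
  assert (Hsub : Re (a - RtoC l) = Re a - l) by (unfold Re; simpl; ring).
  assert (Hadd : forall eps, Re (a + eps * b) = Re a + Re (eps * b)) by reflexivity.
  rewrite Hsub. split.
  - intros H eps Heps. rewrite Hadd.
    pose proof (Re_mul_unimodular_ge eps b Heps). lra.
  - intros H.
    destruct (exists_unimodular_mul_eq_opp_Cmod b) as [eps [Heps Hb]].
    specialize (H eps Heps). rewrite Hadd, Hb in H. simpl in H. lra.
Qed.

Lemma is_derive_C_scal (f : C -> C) (z a c : C) :
  is_derive f z a -> is_derive (fun w => c * f w)%C z (c * a)%C.
Proof.
  intros Ha. unfold is_derive in *.
  eapply filterdiff_ext_lin.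
  - exact (@filterdiff_scal_r_fct C_AbsRing (AbsRing_NormedModule C_AbsRing)
             C_NormedModule (@locally (AbsRing_UniformSpace C_AbsRing) z) _ c f _
             Cmult_comm Ha).
  - intros y. simpl. change ((c * (y * a))%C = (y * (c * a))%C). ring.
Qed.

Lemma inU_locally (z : C) : inU z -> @locally (AbsRing_UniformSpace C_AbsRing) z inU.
Proof.
  unfold inU. intros Hz.
  assert (Hr : 0 < 1 - Cmod z) by lra.
  exists (mkposreal _ Hr). intros y Hy. change C in y.
  change (Cmod (y - z) < 1 - Cmod z) in Hy.
  pose proof (Cmod_triangle (y - z) z) as Htri.
  replace (y - z + z)%C with y in Htri by ring. lra.
Qed.

Section ThreeDerivatives.

Variables (f g : C -> C) (f1 f2 f3 g1 g2 g3 : C -> C).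
Hypotheses (Hf : derivs3_U f f1 f2 f3) (Hg : derivs3_U g g1 g2 g3).

Lemma derivs3_U_ext (h : C -> C) : (forall w, f w = h w) -> derivs3_U h f1 f2 f3.
Proof.
  intros Efh z Hz. destruct (Hf z Hz) as [D1 D23].
  split; [exact (is_derive_ext _ _ _ _ Efh D1) | exact D23].
Qed.

Lemma derivs3_U_scal (c : C) :
  derivs3_U (fun w => c * f w)%C (fun w => c * f1 w)%C (fun w => c * f2 w)%C
    (fun w => c * f3 w)%C.
Proof.
  intros z Hz. destruct (Hf z Hz) as [D1 [D2 D3]].
  split; [| split]; now apply is_derive_C_scal.
Qed.

Lemma derivs3_U_plus :
  derivs3_U (fun w => f w + g w)%C (fun w => f1 w + g1 w)%C (fun w => f2 w + g2 w)%C
    (fun w => f3 w + g3 w)%C.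
Proof.
  intros z Hz. destruct (Hf z Hz) as [D1 [D2 D3]]. destruct (Hg z Hz) as [E1 [E2 E3]].
  split; [| split]; now apply (is_derive_plus (V := C_NormedModule)).
Qed.

End ThreeDerivatives.

(* The disc is open, so two derivatives agreeing on it have the same
   derivative there. *)
Lemma derivs3_U_unique (f f1 f2 f3 g1 g2 g3 : C -> C) :
  derivs3_U f f1 f2 f3 -> derivs3_U f g1 g2 g3 ->
  forall z, inU z -> f1 z = g1 z /\ f2 z = g2 z /\ f3 z = g3 z.
Proof.
  intros Hf Hfg.
  assert (Hnext : forall (h1 k1 h2 k2 : C -> C),
    (forall z, inU z -> h1 z = k1 z) ->
    (forall z, inU z -> is_derive h1 z (h2 z)) ->
    (forall z, inU z -> is_derive k1 z (k2 z)) ->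
    forall z, inU z -> h2 z = k2 z).
  { intros h1 k1 h2 k2 E Dh Dk z Hz.
    rewrite <- (is_C_derive_unique _ _ _ (Dk z Hz)).
    symmetry. apply is_C_derive_unique, (is_derive_ext_loc h1); [| exact (Dh z Hz)].
    eapply filter_imp; [| exact (inU_locally z Hz)]. exact E. }
  assert (E1 : forall z, inU z -> f1 z = g1 z).
  { apply (Hnext f f); [easy | apply Hf | apply Hfg]. }
  assert (E2 : forall z, inU z -> f2 z = g2 z).
  { apply (Hnext f1 g1); [exact E1 | apply Hf | apply Hfg]. }
  assert (E3 : forall z, inU z -> f3 z = g3 z).
  { apply (Hnext f2 g2); [exact E2 | apply Hf | apply Hfg]. }
  auto.
Qed.

Lemma derivs3_U_add_scal (f g f1 f2 f3 g1 g2 g3 : C -> C) (c : C) :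
  derivs3_U f f1 f2 f3 -> derivs3_U g g1 g2 g3 ->
  derivs3_U (fun w => f w + c * g w)%C (fun w => f1 w + c * g1 w)%C
    (fun w => f2 w + c * g2 w)%C (fun w => f3 w + c * g3 w)%C.
Proof.
  intros Hf Hg.
  exact (derivs3_U_plus _ _ _ _ _ _ _ _ Hf (derivs3_U_scal _ _ _ _ Hg c)).
Qed.

Lemma derivs3_U_of_add_sub (s t P1 P2 P3 M1 M2 M3 : C -> C) :
  derivs3_U (fun w => s w + RtoC 1 * t w)%C P1 P2 P3 ->
  derivs3_U (fun w => s w + RtoC (-1) * t w)%C M1 M2 M3 ->
  derivs3_U s (fun w => / 2 * (P1 w + M1 w))%C (fun w => / 2 * (P2 w + M2 w))%C
    (fun w => / 2 * (P3 w + M3 w))%C /\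
  derivs3_U t (fun w => / 2 * (P1 w + RtoC (-1) * M1 w))%C
    (fun w => / 2 * (P2 w + RtoC (-1) * M2 w))%C
    (fun w => / 2 * (P3 w + RtoC (-1) * M3 w))%C.
Proof.
  intros HP HM. split.
  - apply (derivs3_U_ext _ _ _ _
             (derivs3_U_scal _ _ _ _ (derivs3_U_plus _ _ _ _ _ _ _ _ HP HM) (/ 2))).
    intros w. field.
  - apply (derivs3_U_ext _ _ _ _
             (derivs3_U_scal _ _ _ _ (derivs3_U_add_scal _ _ _ _ _ _ _ _ _ HP HM) (/ 2))).
    intros w. field.
Qed.

Lemma Lop_add_scal (g d : R) (f1 f2 f3 h1 h2 h3 : C -> C) (c z : C) :
  Lop g d (fun w => f1 w + c * h1 w)%C (fun w => f2 w + c * h2 w)%C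
    (fun w => f3 w + c * h3 w)%C z =
  (Lop g d f1 f2 f3 z + c * Lop g d h1 h2 h3 z)%C.
Proof. unfold Lop. ring. Qed.

Lemma classH0_classA_add_scal (s t : C -> C) (c : C) :
  classH0 s t -> classA (fun z => s z + c * t z)%C.
Proof.
  intros [As [At [s0 [Ds0 [t0 Dt0]]]]].
  assert (Dadd : forall z a b, is_derive s z a -> is_derive t z b ->
                   is_derive (fun w => s w + c * t w)%C z (a + c * b)%C).
  { intros z a b Da Db.
    exact (is_derive_plus (V := C_NormedModule) _ _ _ _ _ Da
             (is_derive_C_scal _ _ _ c Db)). }
  split; [| split].
  - intros z Hz. destruct (As z Hz) as [a Da]. destruct (At z Hz) as [b Db].
    exists (a + c * b)%C. exact (Dadd z a b Da Db).
  - rewrite s0, t0. ring.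
  - replace (RtoC 1) with (RtoC 1 + c * RtoC 0)%C by ring. exact (Dadd _ _ _ Ds0 Dt0).
Qed.

(* Membership in [R(g, d, l)] does not depend on the choice of derivatives. *)
Lemma classR_add_scal_iff (g d l : R) (s t s1 s2 s3 t1 t2 t3 : C -> C) (c : C) :
  classA (fun z => s z + c * t z)%C ->
  derivs3_U s s1 s2 s3 -> derivs3_U t t1 t2 t3 ->
  classR g d l (fun z => s z + c * t z)%C <->
  (forall z, inU z -> Re (Lop g d s1 s2 s3 z + c * Lop g d t1 t2 t3 z) > l).
Proof.
  intros HA Hs Ht.
  pose proof (derivs3_U_add_scal _ _ _ _ _ _ _ _ c Hs Ht) as Hst.
  split.
  - intros [_ [G1 [G2 [G3 [HG Hlt]]]]] z Hz.
    destruct (derivs3_U_unique _ _ _ _ _ _ _ Hst HG z Hz) as [E1 [E2 E3]].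
    rewrite <- Lop_add_scal. unfold Lop at 1. rewrite E1, E2, E3. exact (Hlt z Hz).
  - intros Hlt. split; [exact HA |].
    do 3 eexists. split; [exact Hst |].
    intros z Hz. rewrite Lop_add_scal. exact (Hlt z Hz).
Qed.

Theorem theorem2 (g d l : R) (hl : 0 <= l) (hlg : l < g) (hgd : g <= d)
  (s t : C -> C) (hf : classH0 s t) :
  classRH0 g d l s t <->
  (forall eps : C, Cmod eps = 1 ->
     classR g d l (fun z => (s z + eps * t z)%C)).
Proof.
  split.
  - intros [_ [s1 [s2 [s3 [t1 [t2 [t3 [Hs [Ht Hlt]]]]]]]]] eps Heps.
    apply (classR_add_scal_iff _ _ _ _ _ _ _ _ _ _ _ _
             (classH0_classA_add_scal _ _ eps hf) Hs Ht).
    intros z Hz. exact (proj1 (Re_sub_gt_Cmod_iff _ _ l) (Hlt z Hz) eps Heps).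
  - intros H. split; [exact hf |].
    assert (Hone : Cmod (RtoC 1) = 1) by (rewrite Cmod_R; apply Rabs_R1).
    assert (Hmone : Cmod (RtoC (-1)) = 1)
      by (rewrite Cmod_R, Rabs_left; lra).
    destruct (H _ Hone) as [_ [P1 [P2 [P3 [HP _]]]]].
    destruct (H _ Hmone) as [_ [M1 [M2 [M3 [HM _]]]]].
    destruct (derivs3_U_of_add_sub _ _ _ _ _ _ _ _ HP HM) as [Hs Ht].
    do 6 eexists. split; [exact Hs |]. split; [exact Ht |].
    intros z Hz. apply Re_sub_gt_Cmod_iff. intros eps Heps.
    exact (proj1 (classR_add_scal_iff _ _ _ _ _ _ _ _ _ _ _ _
             (classH0_classA_add_scal _ _ eps hf) Hs Ht) (H eps Heps) z Hz).
Qed.
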